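(* Let $q\ge3$, $G\in\mathbb G^q$, and let $C$ be the core of $S=\Psi(G)$. Suppose every white vertex of $C$ either has valency strictly smaller than $q$ in $C$, or is incident in $C$ to a core-chain containing at least one internal white vertex. Then $G$ is an SYK graph.
   Context: Fix an integer $q\ge 2$. A $(q+1)$-edge-colored graph (colored graph) is a finite connected graph, multiple edges allowed and no loops, whose edges carry colors in $\{0,1,\dots,q\}$ such that every vertex is incident to exactly one edge of each color. It is rooted if one color-0 edge is distinguished and oriented; it is bipartite if its vertices can be colored black and white so that every edge joins a black and a white vertex, with the convention that the origin of the root edge is black. $\mathbb G^q$ denotes the set of rooted bipartite colored graphs. $G_{\hat 0}$ denotes the graph obtained from $G$ by deleting all color-0 edges; $G$ is an SYK graph if $G_{\hat 0}$ is connected. Constellations: given $G\in\mathbb G^q$, its constellation $S=\Psi(G)$ is obtained as follows: orient every edge from its black to its white endpoint; contract every color-0 edge into a single vertex, called a white vertex of $S$ (the one coming from the root edge is the root vertex). For each $i\in\{1,\dots,q\}$ the color-$i$ edges now form directed cycles; for each such cycle, passing through white vertices $w_1,\dots,w_p$ in this cyclic order, add a new vertex of color $i$ joined by one color-$i$ edge to each $w_k$, equip the new vertex with the cyclic order $(w_1,\dots,w_p)$ of its incident edges, and delete the original color-$i$ edges of the cycle. Core: the core $C$ of $S$ is obtained by repeatedly deleting a vertex of degree $1$ other than the root vertex, together with its incident edge, until every non-root vertex has degree at least 2. A chain-vertex of $C$ is a non-root vertex of degree $2$ in $C$; a core-chain is a path of $C$ (possibly closed) whose internal vertices are chain-vertices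 and whose extremities are not chain-vertices. *)

From mathcomp Require Import all_boot all_order all_fingroup.
Set Implicit Arguments. Unset Strict Implicit. Unset Printing Implicit Defensive.

(* A rooted bipartite (q+1)-edge-colored graph G is encoded by
   - black vertices 'I_n and white vertices 'I_n,
   - for each color c : 'I_q.+1 a permutation sigma c : the color-c edge at the
     black vertex b joins b to the white vertex sigma c b (each color class is a
     perfect matching between black and white vertices; multi-edges allowed),
   - a root black vertex r : 'I_n (the root edge is the color-0 edge at r,
     oriented from its black endpoint r to the white vertex sigma 0 r). *)

Section Defs.
Variables (q n : nat).
Implicit Types (sigma : 'I_q.+1 -> {perm 'I_n}).

(* vertices of G : inl b = black b, inr w = white w *)
Definition Gvtx := ('I_n + 'I_n)%type.

Definition Gadj (P : pred 'I_q.+1) sigma : rel Gvtx :=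
  fun u v => match u, v with
  | inl b, inr w => [exists c, P c && (sigma c b == w)]
  | inr w, inl b => [exists c, P c && (sigma c b == w)]
  | _, _ => false
  end.

Definition Gconnected sigma : Prop :=
  forall u v : Gvtx, connect (Gadj predT sigma) u v.

Definition SYK sigma : Prop :=
  forall u v : Gvtx, connect (Gadj (fun c => c != ord0) sigma) u v.

(* White vertex of S = color-0 edge, indexed by its black endpoint b.
   For i : 'I_q (standing for color i+1), the color-(i+1) edge leaving the
   contracted vertex b reaches white sigma_{i+1} b, which belongs to the
   color-0 edge with black endpoint sigma_0^{-1}(sigma_{i+1} b). *)
Definition tau sigma (i : 'I_q) : {perm 'I_n} :=
  (sigma (lift ord0 i) * (sigma ord0)^-1)%g.

(* vertices of S : inl b = white vertex b;
   inr (i, A) = the vertex of color i+1 attached to the cycle A of tau i *)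
Definition Svtx := ('I_n + ('I_q * {set 'I_n}))%type.

Definition Svertices sigma : {set Svtx} :=
  [set v : Svtx | match v with
                  | inl _ => true
                  | inr (i, A) => [exists b, A == porbit (tau sigma i) b]
                  end].

Definition Sadj : rel Svtx :=
  fun u v => match u, v with
  | inl b, inr (_, A) => b \in A
  | inr (_, A), inl b => b \in A
  | _, _ => false
  end.

Definition Sroot (r : 'I_n) : Svtx := inl r.

Definition deg (X : {set Svtx}) (v : Svtx) : nat := #|[set u in X | Sadj v u]|.

Definition prune_step (r : 'I_n) (X Y : {set Svtx}) : Prop :=
  exists2 v, v \in X & [/\ v != Sroot r, deg X v = 1 & Y = X :\ v].

Inductive prunes (r : 'I_n) : {set Svtx} -> {set Svtx} -> Prop :=
  | prunes_refl X : prunes r X X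
  | prunes_step X Y Z : prune_step r X Y -> prunes r Y Z -> prunes r X Z.

Definition is_core sigma (r : 'I_n) (C : {set Svtx}) : Prop :=
  prunes r (Svertices sigma) C /\
  (forall v, v \in C -> v != Sroot r -> 2 <= deg C v).

Definition chain_vertex (r : 'I_n) (C : {set Svtx}) (v : Svtx) : bool :=
  [&& v \in C, v != Sroot r & deg C v == 2].

(* internal vertices of the path x :: p *)
Definition internal (p : seq Svtx) : seq Svtx := take (size p).-1 p.

(* x :: p is a core-chain of C: a (simple, possibly closed) path of C with at
   least one edge, whose internal vertices are chain-vertices and whose
   extremities x and last x p are not chain-vertices *)
Definition core_chain (r : 'I_n) (C : {set Svtx}) (x : Svtx) (p : seq Svtx) : Prop :=
  [/\ 0 < size p, path Sadj x p, all (fun v => v \in C) (x :: p)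
    & [/\ uniq (belast x p) && uniq p, (last x p == x) ==> (2 < size p),
           all (chain_vertex r C) (internal p)
         & ~~ chain_vertex r C x && ~~ chain_vertex r C (last x p)]].

Definition is_white (v : Svtx) : bool := if v is inl _ then true else false.

End Defs.

Arguments is_white {q n} v.
Arguments Sroot {q n} r.
Arguments Sadj {q n}.

From mathcomp Require Import all_boot all_order all_fingroup.
Set Implicit Arguments. Unset Strict Implicit. Unset Printing Implicit Defensive.

(* Assume G is connected but not SYK, and fix the connected
   component K of G_0hat containing some vertex v0.  A color-0 edge is MIXED
   when exactly one of its endpoints lies in K; since G is connected and K is
   a proper subset, some color-0 edge is mixed.  Walking around a color-i
   cycle of the constellation, K-membership changes exactly at mixed edges,
   so every cycle through a mixed white vertex meets a second one.  Hence the
   set H of mixed white vertices together with the colored vertices adjacent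
   to them has minimum degree >= 2 (white vertices even have degree q), so H
   survives pruning and lies in the core C.  A mixed white vertex b then has
   valency >= q in C, so by hypothesis some core-chain ends at b and has an
   internal white vertex.  But the first colored vertex of that chain is a
   chain-vertex whose only two neighbours in C are mixed white vertices, and
   the next one has valency >= q >= 3, so it cannot be a chain-vertex:
   the chain has no internal white vertex, a contradiction. *)

Lemma Gadj_sym q n (P : pred 'I_q.+1) (sigma : 'I_q.+1 -> {perm 'I_n}) :
  symmetric (Gadj P sigma).
Proof. by move=> [x|x] [y|y]. Qed.

Lemma Sadj_sym q n : symmetric (@Sadj q n).
Proof. by move=> [x|[i A]] [y|[j B]]. Qed.

Lemma porbit_flip (T : finType) (t : {perm T}) (f : T -> bool) (x : T) :
  f (t x) != f x ->
  exists2 y, y \in porbit t x & (y != x) && (f (t y) != f y).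
Proof.
move=> flip_x; apply/exists_inP; apply: contraLR flip_x.
move/exists_inPn=> steady; rewrite negbK.
pose y k := ((t ^+ k.+1)%g : {perm T}) x.
have yS k : y k.+1 = t (y k) by rewrite /y expgSr permM.
have label k : (forall j, j < k -> y j != x) -> f (y k) = f (y 0).
  elim: k => // k IHk y_ne; rewrite yS.
  have /negbTE := steady _ (mem_porbit t k.+1 x).
  rewrite y_ne // /= => /negbFE/eqP->; apply: IHk => j jk.
  exact/y_ne/ltnW.
have returns : exists k, y k == x.
  by exists #[t]%g.-1; rewrite /y prednK ?order_gt0 // expg_order perm1.
have [m /eqP ym m_min] := ex_minnP returns.
have := label m; rewrite ym /y expg1 => -> //.
by move=> j jm; apply/negP=> /m_min; rewrite leqNgt jm.
Qed.

Section Core.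
Variables (q n : nat) (r : 'I_n).

Lemma deg_subset (X Y : {set Svtx q n}) v : X \subset Y -> deg X v <= deg Y v.
Proof.
move=> XY; apply: subset_leq_card; apply/subsetP=> u.
by rewrite !inE => /andP[/(subsetP XY) -> ->].
Qed.

Lemma prunes_sub (X Y : {set Svtx q n}) : prunes r X Y -> Y \subset X.
Proof.
elim=> [Z|X1 Y1 Z [v _ [_ _ ->]] _ IH]; first exact: subxx.
exact: subset_trans IH (subsetDl _ _).
Qed.

(* A vertex set of minimum degree 2 is never touched by pruning: each of its
   vertices keeps degree >= 2 and so is never a leaf. *)
Lemma prunes_keep (H X Y : {set Svtx q n}) :
  (forall v, v \in H -> 2 <= deg H v) ->
  prunes r X Y -> H \subset X -> H \subset Y.
Proof.
move=> H_deg; elim=> // X1 Y1 Z [v _ [_ deg_v ->]] _ IH HX; apply: IH.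
apply/subsetP=> x xH; rewrite in_setD1 (subsetP HX) // andbT.
apply: contraTneq (H_deg _ xH) => ->.
by rewrite -ltnNge -deg_v ltnS deg_subset.
Qed.

Lemma core_chain_from_end (C : {set Svtx q n}) x p w (P : pred (Svtx q n)) :
  core_chain r C x p -> (x == w) || (last x p == w) ->
  exists s, [/\ path Sadj w s, all (chain_vertex r C) s
                & has P s = has P (internal p)].
Proof.
move=> [p_gt0 pth _ [_ _ chain_int _]].
case/lastP: p p_gt0 pth chain_int => [//|p z] _ pth chain_int.
have int_p : internal (rcons p z) = p.
  by rewrite /internal size_rcons -cats1 take_size_cat.
rewrite int_p last_rcons in chain_int *; case/orP=> /eqP<-.
  by exists p; move: pth; rewrite rcons_path => /andP[].
exists (rev p); rewrite all_rev has_rev; split=> //.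
have : path (fun a c => Sadj c a) x (rcons p z).
  by rewrite (eq_path (e' := Sadj)) // => a c; apply: Sadj_sym.
by rewrite -rev_path last_rcons belast_rcons rev_cons rcons_path => /andP[].
Qed.

End Core.

Section MixedEdges.
Variables (q n : nat) (sigma : 'I_q.+1 -> {perm 'I_n}) (v0 : Gvtx n).

Local Notation G0 := (Gadj (fun c => c != ord0) sigma).

Definition inK (u : Gvtx n) : bool := connect G0 u v0.

Definition mixed (b : 'I_n) : bool := inK (inl b) != inK (inr (sigma ord0 b)).

Lemma inK_edge x y : G0 x y -> inK x = inK y.
Proof.
move=> xy; apply: same_connect1 xy v0.
exact: sym_connect_sym (@Gadj_sym _ _ _ _).
Qed.

(* The step b -> tau i b of the constellation goes from the white endpoint of
   the color-0 edge at b to that of tau i b through a color-(i+1) edge. *)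
Lemma inK_tau i b : inK (inr (sigma ord0 (tau sigma i b))) = inK (inl b).
Proof.
rewrite /tau permM permKV; symmetry; apply: inK_edge => /=.
by apply/existsP; exists (lift ord0 i); rewrite eq_sym neq_lift eqxx.
Qed.

Lemma exists_mixed u : Gconnected sigma -> ~~ inK u -> exists b, mixed b.
Proof.
move=> G_conn u_notK; have [b mb|no_mixed] := pickP mixed; first by exists b.
have closedK : closed (Gadj predT sigma) [pred u | inK u].
  have inK_col b c : inK (inl b) = inK (inr (sigma c b)).
    have [->|c_ne0] := eqVneq c ord0; first exact/eqP/negbFE/no_mixed.
    by apply: inK_edge; apply/existsP; exists c; rewrite c_ne0 eqxx.
  by move=> [x|x] [y|y] //= /existsP[c /eqP <-]; rewrite !inE (inK_col _ c).
have := closed_connect closedK (G_conn u v0).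
by rewrite !inE (negbTE u_notK) /inK connect0.
Qed.

Lemma mixed_cycle i b :
  mixed b -> exists2 b1, b1 \in porbit (tau sigma i) b & (b1 != b) && mixed b1.
Proof.
pose f b := inK (inr (sigma ord0 b)).
have flip c : (f (tau sigma i c) != f c) = mixed c by rewrite /f inK_tau.
by rewrite -flip => /porbit_flip[b1 b1_orb]; rewrite flip; exists b1.
Qed.

Definition Hset : {set Svtx q n} :=
  [set v : Svtx q n | match v with
    | inl b => mixed b
    | inr (i, A) => [exists b, (A == porbit (tau sigma i) b) && mixed b]
    end].

Lemma Hset_sub : Hset \subset Svertices sigma.
Proof.
apply/subsetP=> -[x|[i A]]; rewrite !inE //= => /existsP[b /andP[eA _]].
by apply/existsP; exists b.
Qed.

Lemma mixed_white_deg (X : {set Svtx q n}) b :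
  mixed b -> Hset \subset X -> q <= deg X (inl b).
Proof.
move=> mb HX; pose f i : Svtx q n := inr (i, porbit (tau sigma i) b).
have f_inj : injective f by move=> i j [].
rewrite -[X in X <= _](card_ord q) -cardsT -(card_imset _ f_inj).
apply: subset_leq_card; apply/subsetP=> _ /imsetP[i _ ->].
rewrite inE /= porbit_id andbT (subsetP HX) // inE.
by apply/existsP; exists b; rewrite eqxx.
Qed.

Lemma mixed_color_nbrs (X : {set Svtx q n}) i b :
  mixed b -> Hset \subset X ->
  exists b1, [/\ b1 != b, mixed b1 &
    [set (inl b : Svtx q n); inl b1] \subset
       [set u in X | Sadj (inr (i, porbit (tau sigma i) b) : Svtx q n) u]].
Proof.
move=> mb HX; have [b1 b1_orb /andP[b1_ne mb1]] := mixed_cycle i mb.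
exists b1; split=> //; apply/subsetP=> u; rewrite !inE => /orP[]/eqP->/=.
  by rewrite porbit_id andbT (subsetP HX) // inE.
by rewrite b1_orb andbT (subsetP HX) // inE.
Qed.

Lemma Hset_deg : 1 < q -> forall v, v \in Hset -> 2 <= deg Hset v.
Proof.
move=> q_gt1 [b|[i A]]; rewrite inE /=.
  by move=> mb; apply: leq_trans q_gt1 (mixed_white_deg mb (subxx _)).
case/existsP=> b /andP[/eqP -> mb].
have [b1 [b1_ne _ nbrs]] := mixed_color_nbrs i mb (subxx Hset).
apply: leq_trans (subset_leq_card nbrs).
by rewrite cards2 eq_sym (inj_eq inl_inj) b1_ne.
Qed.

Lemma Hset_in_core r C : 1 < q -> is_core sigma r C -> Hset \subset C.
Proof.
move=> q_gt1 [prC _].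
exact: prunes_keep (Hset_deg q_gt1) prC Hset_sub.
Qed.

Lemma color_vertex_orbit i A b :
  (inr (i, A) : Svtx q n) \in Svertices sigma -> b \in A ->
  A = porbit (tau sigma i) b.
Proof.
rewrite inE => /existsP[b2 /eqP ->] bA.
by apply/eqP; rewrite eq_sym eq_porbit_mem.
Qed.

(* A path of chain-vertices leaving a mixed white vertex has no white vertex:
   its second vertex would be a mixed white vertex of valency >= q >= 3. *)
Lemma chain_from_mixed r C b s :
  2 < q -> is_core sigma r C -> mixed b ->
  path Sadj (inl b : Svtx q n) s -> all (chain_vertex r C) s ->
  ~~ has (@is_white q n) s.
Proof.
move=> q_gt2 coreC mb; have HC := Hset_in_core (ltnW q_gt2) coreC.
have CS : C \subset Svertices sigma by apply: prunes_sub coreC.1.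
case: s => [|[//|[i A] [|d s]]] //= /and3P[bA Ad _] /and3P[cv_c cv_d _].
move: cv_c cv_d => /and3P[cC _ /eqP deg_c] /and3P[dC _ /eqP deg_d].
have eA := color_vertex_orbit (subsetP CS _ cC) bA; subst A.
have [b1 [b1_ne mb1 nbrs]] := mixed_color_nbrs i mb HC.
have nbrsE : [set (inl b : Svtx q n); inl b1] =
    [set u in C | Sadj (inr (i, porbit (tau sigma i) b) : Svtx q n) u].
  apply/eqP; rewrite eqEcard nbrs cards2 eq_sym (inj_eq inl_inj) b1_ne.
  by rewrite -/(deg _ _) deg_c.
have : d \in [set u in C | Sadj (inr (i, porbit (tau sigma i) b)) u].
  by rewrite inE dC.
rewrite -nbrsE !inE => /orP[]/eqP d_eq; subst d.
  by have := leq_trans q_gt2 (mixed_white_deg mb HC); rewrite deg_d.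
by have := leq_trans q_gt2 (mixed_white_deg mb1 HC); rewrite deg_d.
Qed.

End MixedEdges.

Theorem mainTheorem10 (q n : nat) (sigma : 'I_q.+1 -> {perm 'I_n}) (r : 'I_n)
    (C : {set Svtx q n}) :
  3 <= q ->
  Gconnected sigma ->
  is_core sigma r C ->
  (forall w : 'I_n, (inl w : Svtx q n) \in C ->
     deg C (inl w : Svtx q n) < q \/
     exists (x : Svtx q n) (p : seq (Svtx q n)),
       [/\ core_chain r C x p, (x == inl w) || (last x p == inl w)
         & has (@is_white q n) (internal p)]) ->
  SYK sigma.
Proof.
move=> q_ge3 G_conn coreC hyp u0 v0; apply: contraT => not_conn.
have [b mb] := exists_mixed (v0 := v0) G_conn not_conn.
have HC := Hset_in_core v0 (ltnW q_ge3) coreC.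
have bC : (inl b : Svtx q n) \in C by rewrite (subsetP HC) // inE.
have deg_b := mixed_white_deg mb HC.
case: (hyp b bC) => [|[x [p [chain ends white]]]]; first by rewrite ltnNge deg_b.
have [s [pth chain_s has_s]] := core_chain_from_end is_white chain ends.
by move: (chain_from_mixed q_ge3 coreC mb pth chain_s); rewrite has_s white.
Qed.
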